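(* Let $L_I$ and $L_U$ be finite disjoint alphabets, $L=L_I\cup L_U$, let $\mathcal{S}$ be a deterministic IOLTS in $\mathcal{IO}(L_I,L_U)$, and let $m\ge 1$ be an integer. Then there exists a fault model $\mathcal{M}$ (a finite set of test purposes over $L$) that is $m$-ioco-complete for $\mathcal{S}$ relative to $\mathcal{IO}(L_I,L_U)[m]$; that is, for every implementation $\mathcal{I}\in\mathcal{IO}(L_I,L_U)[m]$ we have $\mathcal{I}\ \mathbf{ioco}\ \mathcal{S}$ if and only if $\mathcal{I}$ passes every test purpose in $\mathcal{M}$. Moreover, every test purpose in $\mathcal{M}$ can be taken to be deterministic, output-deterministic, input-enabled, and acyclic except for self-loops at its $\mathit{pass}$ and $\mathit{fail}$ states.
   Context: An IOLTS is a tuple $(S,s_0,L_I,L_U,T)$ with $S$ a set of states, $s_0\in S$ the initial state, $L_I$ (inputs) and $L_U$ (outputs) disjoint finite alphabets, $L=L_I\cup L_U$, and $T\subseteq S\times(L\cup\{\tau\})\times S$ a finite transition set, where $\tau\notin L$ is an internal (unobservable) action. $\mathcal{IO}(L_I,L_U)$ denotes the class of all IOLTSs with input alphabet $L_I$ and output alphabet $L_U$, and $\mathcal{IO}(L_I,L_U)[m]$ the subclass of those with at most $m$ states. An IOLTS is deterministic if it has no $\tau$-transitions and at most one transition from each state with each label. A state $s$ is quiescent if no transition labeled by an output in $L_U$ or by $\tau$ leaves $s$; for each quiescent state a self-loop $(s,\delta,s)$ is added, with $\delta$ a fresh symbol. For a word $\sigma=l_1\cdots l_n$ of observable labels, $s\xRightarrow{\sigma}s'$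 means there is a sequence of transitions from $s$ to $s'$ whose label sequence, after deleting all $\tau$'s, is $\sigma$. The observable traces are $otr(s)=\{\sigma\mid \exists s',\ s\xRightarrow{\sigma}s'\}$ and $otr(\mathcal{S})=otr(s_0)$. For a set or state $s$, $s\ \mathit{after}\ \sigma=\{q\mid s\xRightarrow{\sigma}q\}$, and for a set of states $P$, $out(P)=\{x\in L_U\cup\{\delta\}\mid \exists q\in P,\ q\xRightarrow{x}\}$. For an implementation $\mathcal{I}=(Q,q_0,L_I,L_U,R)$ and specification $\mathcal{S}=(S,s_0,L_I,L_U,T)$: $\mathcal{I}\ \mathbf{ioco}\ \mathcal{S}$ iff $out(q_0\ \mathit{after}\ \sigma)\subseteq out(s_0\ \mathit{after}\ \sigma)$ for all $\sigma\in otr(\mathcal{S})$. A test purpose (TP) over $L$ is an IOLTS $\mathcal{T}\in\mathcal{IO}(L_U,L_I)$ (its inputs are the implementation's outputs and its outputs are the implementation's inputs) having two special states $\mathit{pass}$ and $\mathit{fail}$, such that for no word $\sigma$ do we have $\mathit{fail}\xRightarrow{\sigma}\mathit{pass}$ or $\mathit{pass}\xRightarrow{\sigma}\mathit{fail}$. A fault model over $L$ is a finite set of TPs over $L$. A TP is output-deterministic if at every state exactly one of its output labels (elements of $L_I$) is defined, and input-enabled if at every state every one of its input labels (every element of $L_U$) is defined. For an implementation $\mathcal{I}=(Q,q_0,L_I,L_U,R)$ and a TP $\mathcal{T}$ with initial state $t_0$, the synchronous product $\mathcal{I}\times\mathcal{T}$ has states $(t,q)$, initial state $(t_0,q_0)$,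 a transition $(t,q)\xrightarrow{l}(t',q')$ for $l\in L$ whenever $t\xrightarrow{l}t'$ in $\mathcal{T}$ and $q\xrightarrow{l}q'$ in $\mathcal{I}$, and $\tau$-moves of either component taken individually. $\mathcal{I}$ passes $\mathcal{T}$ if there is no word $\sigma$ over $L$ and no state $q$ of $\mathcal{I}$ with $(t_0,q_0)\xRightarrow{\sigma}(\mathit{fail},q)$ in $\mathcal{I}\times\mathcal{T}$; $\mathcal{I}$ passes a fault model $\mathcal{M}$ if it passes every TP in $\mathcal{M}$. *)

From mathcomp Require Import all_boot.
From Stdlib Require List.

Set Implicit Arguments.
Unset Strict Implicit.
Unset Printing Implicit Defensive.

Section IOLTS.

(* Input alphabet L_I and output alphabet L_U; disjointness is built in
   by using the sum type LI + LU for L = L_I u L_U. *)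
Variables LI LU : finType.

(* An IOLTS in IO(L_I, L_U): a finite state set, an initial state and a
   (necessarily finite) transition relation labelled by L u {tau};
   [None] is tau, [Some (inl i)] an input, [Some (inr o)] an output. *)
Record iolts := IOLTS {
  st : finType;
  init : st;
  trans : st -> option (LI + LU) -> st -> bool
}.

Definition deterministic (S : iolts) : Prop :=
  (forall s s' : st S, ~~ trans s None s') /\
  (forall (s : st S) a s1 s2, trans s (Some a) s1 -> trans s (Some a) s2 -> s1 = s2).

Definition at_most_states (m : nat) (S : iolts) : Prop := #|st S| <= m.

Definition quiescent (S : iolts) (s : st S) : Prop :=
  forall (a : option (LI + LU)) s',
    (a = None \/ exists o, a = Some (inr o)) -> ~~ trans s a s'.

Inductive lab := LIn of LI | LOut of LU | LDelta.

Definition is_output_lab (x : lab) : Prop :=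
  match x with LIn _ => False | _ => True end.

(* Observable one-step transitions of the suspension IOLTS (a delta
   self-loop is added at every quiescent state). *)
Definition sstep (S : iolts) (s : st S) (l : lab) (s' : st S) : Prop :=
  match l with
  | LIn i => trans s (Some (inl i)) s'
  | LOut o => trans s (Some (inr o)) s'
  | LDelta => quiescent s /\ s' = s
  end.

Inductive wstep (S : iolts) : st S -> seq lab -> st S -> Prop :=
| wstep_nil s : wstep s [::] s
| wstep_tau s s1 sg s' : trans s None s1 -> wstep s1 sg s' -> wstep s sg s'
| wstep_obs s l s1 sg s' :
    sstep s l s1 -> wstep s1 sg s' -> wstep s (l :: sg) s'.

Definition otr (S : iolts) (sg : seq lab) : Prop := exists s', wstep (init S) sg s'.

Definition out_after (S : iolts) (sg : seq lab) (x : lab) : Prop :=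
  is_output_lab x /\
  exists q, wstep (init S) sg q /\ exists q', wstep q [:: x] q'.

Definition ioco (I S : iolts) : Prop :=
  forall sg, otr S sg -> forall x, out_after I sg x -> out_after S sg x.

(* Test purposes: IOLTSs with inputs L_U u {delta} and outputs L_I, i.e.
   transitions labelled by [lab] or tau ([None]), with states pass, fail. *)
Record tp := TP {
  tst : finType;
  tinit : tst;
  ttrans : tst -> option lab -> tst -> bool;
  tpass : tst;
  tfail : tst
}.

Inductive twstep (T : tp) : tst T -> seq lab -> tst T -> Prop :=
| twstep_nil t : twstep t [::] t
| twstep_tau t t1 sg t' : ttrans t None t1 -> twstep t1 sg t' -> twstep t sg t'
| twstep_obs t l t1 sg t' :
    ttrans t (Some l) t1 -> twstep t1 sg t' -> twstep t (l :: sg) t'.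

Definition is_tp (T : tp) : Prop :=
  forall sg, ~ twstep (tfail T) sg (tpass T) /\ ~ twstep (tpass T) sg (tfail T).

Inductive pwstep (I : iolts) (T : tp) :
  tst T * st I -> seq lab -> tst T * st I -> Prop :=
| pw_nil p : pwstep p [::] p
| pw_tauT t t1 q sg p' :
    ttrans t None t1 -> pwstep (t1, q) sg p' -> pwstep (t, q) sg p'
| pw_tauI t q q1 sg p' :
    trans q None q1 -> pwstep (t, q1) sg p' -> pwstep (t, q) sg p'
| pw_sync t t1 q q1 l sg p' :
    ttrans t (Some l) t1 -> sstep q l q1 -> pwstep (t1, q1) sg p' ->
    pwstep (t, q) (l :: sg) p'.

Definition passes (I : iolts) (T : tp) : Prop :=
  ~ exists sg q, pwstep (tinit T, init I) sg (tfail T, q).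

Definition fault_model := seq tp.

Definition passes_fm (I : iolts) (M : fault_model) : Prop :=
  forall T, List.In T M -> passes I T.

Definition m_ioco_complete (m : nat) (S : iolts) (M : fault_model) : Prop :=
  forall I : iolts, at_most_states m I -> (ioco I S <-> passes_fm I M).

Definition tp_deterministic (T : tp) : Prop :=
  (forall t t' : tst T, ~~ ttrans t None t') /\
  (forall (t : tst T) l t1 t2, ttrans t (Some l) t1 -> ttrans t (Some l) t2 -> t1 = t2).

Definition tp_output_deterministic (T : tp) : Prop :=
  forall t : tst T, exists i, (exists t', ttrans t (Some (LIn i)) t') /\
    forall j, (exists t', ttrans t (Some (LIn j)) t') -> j = i.

Definition tp_input_enabled (T : tp) : Prop :=
  forall t : tst T, (forall o, exists t', ttrans t (Some (LOut o)) t') /\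
            (exists t', ttrans t (Some LDelta) t').

Definition tp_edge (T : tp) (t t' : tst T) : Prop :=
  t <> t' /\ exists a, ttrans t a t'.

Inductive tp_path (T : tp) : tst T -> tst T -> Prop :=
| tp_path1 t t' : tp_edge t t' -> tp_path t t'
| tp_pathS t t1 t' : tp_edge t t1 -> tp_path t1 t' -> tp_path t t'.

Definition tp_acyclic_but_pass_fail (T : tp) : Prop :=
  (forall t : tst T, ~ tp_path t t) /\
  (forall (t : tst T) a, ttrans t a t -> t = tpass T \/ t = tfail T).

End IOLTS.

From HB Require Import structures.
From Stdlib Require List.
From Stdlib Require Import ClassicalDescription Classical.
From mathcomp Require Import all_boot zify.

Set Implicit Arguments.
Unset Strict Implicit.
Unset Printing Implicit Defensive.

(* An implementation [I] violates [ioco S] iff it produces,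
   after some trace [sg] of [S], an output [x] that [S] forbids there.  For
   each such pair [(sg, x)] the "chain" test purpose [chain_tp sg x] walks
   along [sg], moves to fail on [x] and to pass on any deviation; [I] fails
   it iff [I] has the trace [sg ++ [:: x]].  Finiteness comes from a pumping argument: the
   property "[(sg, x)] is a violation" only depends on [sg] through the pair
   of state sets [(init I after sg, init S after sg)], so a violation exists
   iff one exists with [size sg < 2 ^ #|st I| * 2 ^ #|st S|].  The fault
   model thus consists of the chain test purposes of all forbidden pairs
   with [size sg <= 2 ^ m * 2 ^ #|st S|]. *)

Definition classicb (P : Prop) : bool :=
  if excluded_middle_informative P then true else false.

Lemma classicbP (P : Prop) : reflect P (classicb P).
Proof. by rewrite /classicb; case: excluded_middle_informative => H; constructor. Qed.

(* Among the
   [size sg + 1] prefixes of a too long witness two share their image, and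
   cutting out the part between them gives a shorter witness. *)
Lemma pumping (A : Type) (T : finType) (f : seq A -> T) (P : seq A -> Prop) :
  (forall u1 u2 v, f u1 = f u2 -> P (u1 ++ v) -> P (u2 ++ v)) ->
  forall sg, P sg -> exists2 sg', P sg' & size sg' < #|T|.
Proof.
move=> Pcongr sg; have [n] := ubnP (size sg); elim: n sg => // n IHn sg ltsn Psg.
case: (ltnP (size sg) #|T|) => [short|long]; first by exists sg.
pose pref (j : 'I_(size sg).+1) := f (take j sg).
have /injectivePn [a [b neab eqab]] : ~~ injectiveb pref.
  by apply/injectiveP => /leq_card; rewrite card_ord; lia.
have cut (j k : 'I_(size sg).+1) : j < k -> pref j = pref k ->
    exists2 sg', P sg' & size sg' < #|T|.
  move=> ltjk eqjk; apply: (IHn (take j sg ++ drop k sg)).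
    rewrite size_cat size_take size_drop; have := ltn_ord k; case: ifP; lia.
  by apply: (Pcongr (take k sg)) => //; rewrite cat_take_drop.
case: (ltngtP a b) => [ltab|ltba|/val_inj eq_ab].
- exact: cut a b ltab eqab.
- exact: cut b a ltba (esym eqab).
- by rewrite eq_ab eqxx in neab.
Qed.

Lemma In_map (A : eqType) (B : Type) (f : A -> B) (s : seq A) (y : B) :
  List.In y (map f s) <-> exists2 x, x \in s & y = f x.
Proof.
elim: s => [|a s IH] /=; first by split=> // -[].
split=> [[<-|/IH [x xs ->]]|[x]].
- by exists a; rewrite ?mem_head.
- by exists x; rewrite // in_cons xs orbT.
- rewrite in_cons => /orP[/eqP -> ->|xs ey]; first by left.
  by right; apply/IH; exists x.
Qed.

Lemma card_sets (T : finType) : #|{set T}| = 2 ^ #|T|.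
Proof. by rewrite -[LHS]cardsT -powersetT card_powerset cardsT. Qed.

Definition lab_code (LI LU : finType) (l : lab LI LU) : option (LI + LU) :=
  match l with LIn i => Some (inl i) | LOut o => Some (inr o) | LDelta => None end.

Definition lab_decode (LI LU : finType) (c : option (LI + LU)) : lab LI LU :=
  match c with
  | Some (inl i) => LIn LU i | Some (inr o) => LOut LI o | None => LDelta LI LU
  end.

Lemma lab_codeK (LI LU : finType) : cancel (@lab_code LI LU) (@lab_decode LI LU).
Proof. by case. Qed.

HB.instance Definition _ (LI LU : finType) :=
  Finite.copy (lab LI LU) (can_type (@lab_codeK LI LU)).

Section WeakTraces.
Variables LI LU : finType.
Implicit Types (X : iolts LI LU) (sg u v : seq (lab LI LU)) (x : lab LI LU).

Lemma wstep_cat X (q r q' : st X) u v :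
  wstep q u r -> wstep r v q' -> wstep q (u ++ v) q'.
Proof.
elim=> [//|s s1 sg s' tau _ IH|s l s1 sg s' step _ IH] rv.
- exact: wstep_tau tau (IH rv).
- exact: wstep_obs step (IH rv).
Qed.

Lemma wstep_split X (q q' : st X) u v :
  wstep q (u ++ v) q' -> exists2 r, wstep q u r & wstep r v q'.
Proof.
case: u => [|a u] /=; first by exists q => //; constructor.
move E: (a :: u ++ v) => w qw; elim: qw a u E => {w}
  [//|s s1 sg s' tau _ IH|s l s1 sg s' step rest IH] a u E.
- by have [r ur rv] := IH _ _ E; exists r => //; exact: wstep_tau tau ur.
- case: E => -> {a}; case: u => [|b u] /= E.
  + by exists s1; [apply: wstep_obs step _; constructor|rewrite E].
  + have [r ur rv] := IH _ _ E; exists r => //; exact: wstep_obs step ur.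
Qed.

Definition after X sg : {set st X} := [set q | classicb (wstep (init X) sg q)].

Lemma afterP X sg q : reflect (wstep (init X) sg q) (q \in after X sg).
Proof. by rewrite inE; apply: classicbP. Qed.

Lemma after_catr X u1 u2 v :
  after X u1 = after X u2 -> after X (u1 ++ v) = after X (u2 ++ v).
Proof.
have half w1 w2 q : after X w1 = after X w2 ->
    wstep (init X) (w1 ++ v) q -> wstep (init X) (w2 ++ v) q.
  move=> E /wstep_split [r /afterP r1 rv]; apply: wstep_cat rv.
  by rewrite E in r1; apply/afterP.
move=> E; apply/setP => q; apply/afterP/afterP; [exact: half|exact: half (esym E)].
Qed.

Lemma otr_after X u1 u2 : after X u1 = after X u2 -> otr X u1 -> otr X u2.
Proof. by move=> E [q /afterP]; rewrite E => /afterP; exists q. Qed.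

Lemma out_after_after X u1 u2 x :
  after X u1 = after X u2 -> out_after X u1 x -> out_after X u2 x.
Proof.
by move=> E [outx [q [/afterP + qx]]]; rewrite E => /afterP; split=> //; exists q.
Qed.

Definition forbidden (S : iolts LI LU) sg x : Prop :=
  [/\ otr S sg, is_output_lab x & ~ out_after S sg x].

Definition violation (I S : iolts LI LU) sg x : Prop :=
  forbidden S sg x /\ out_after I sg x.

Lemma ioco_violation (I S : iolts LI LU) :
  ioco I S <-> forall sg x, ~ violation I S sg x.
Proof.
split=> [iocoIS sg x [[trS _ noutS] outI] | noviol sg trS x outI].
  exact/noutS/iocoIS.
apply: NNPP => noutS; apply: (noviol sg x); split=> //.
by split=> //; case: outI.
Qed.

(* If [I] violates ioco, it does so along a trace shorter than the number
   of pairs of state sets of [I] and [S]: by [after_catr], violations are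
   preserved by exchanging prefixes reaching the same pair of sets. *)
Lemma short_violation (I S : iolts LI LU) sg x : violation I S sg x ->
  exists2 sg', violation I S sg' x & size sg' < #|{set st I}| * #|{set st S}|.
Proof.
pose f u := (after I u, after S u).
have congr u1 u2 v :
    f u1 = f u2 -> violation I S (u1 ++ v) x -> violation I S (u2 ++ v) x.
  case=> /(after_catr v) EI /(after_catr v) ES [[trS outx noutS] outI].
  split; last exact: out_after_after outI.
  split=> //; first exact: otr_after trS.
  by move=> /(out_after_after (esym ES)).
move=> /(@pumping _ _ f (violation I S ^~ x) congr) [sg' viol short].
by exists sg' => //; rewrite card_prod in short.
Qed.

End WeakTraces.

Section StepTestPurposes.
Variables LI LU : finType.

Definition step_tp (T : finType) (t0 : T) (step : T -> lab LI LU -> option T)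
    (pass fail : T) : tp LI LU :=
  @TP LI LU T t0 (fun t a t' => if a is Some l then step t l == Some t' else false)
    pass fail.

Lemma step_tp_det (T : finType) t0 step (pass fail : T) :
  tp_deterministic (step_tp t0 step pass fail).
Proof. by split=> // t l t1 t2 /= /eqP -> /eqP []. Qed.

End StepTestPurposes.

Section ChainTestPurpose.
Variables (LI LU : finType) (i0 : LI).
Implicit Types (l : lab LI LU) (I : iolts LI LU).

(* The labels a test purpose may offer at a state whose designated output
   (an input of the implementation) is [i]: [LIn i] and every input of the
   test purpose (outputs of the implementation and quiescence). *)
Definition offered (i : LI) l : bool := if l is LIn k then k == i else true.

(* The test purpose [chain_tp w x] follows the word [w] along states
   [0, ..., size w] and then moves to fail on the output [x]; every other
   offered label leads to pass.  At position [j] the expected label is the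
   [j]-th letter of [w ++ [:: x]], and the designated output of the test
   purpose is the expected label if that is an input of the implementation
   (an arbitrary [i0] otherwise). *)
Variables (w : seq (lab LI LU)) (x : lab LI LU).

Definition cstate := ('I_(size w).+1 + bool)%type.
Definition cpass : cstate := inr true.
Definition cfail : cstate := inr false.

Definition expected (j : nat) : lab LI LU := nth x w j.

Definition designated (j : nat) : LI := if expected j is LIn i then i else i0.

Definition advance (j : 'I_(size w).+1) : cstate :=
  if j < size w then inl (inord j.+1) else cfail.

Definition cstep (t : cstate) l : option cstate :=
  match t with
  | inl j =>
      if l == expected j then Some (advance j)
      else if offered (designated j) l then Some cpass else None
  | inr _ => if offered i0 l then Some t else None
  end.

Definition chain_tp : tp LI LU := step_tp (inl ord0) cstep cpass cfail.

Lemma chain_verdict_absorbing b sg (t : cstate) :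
  twstep (T := chain_tp) (inr b) sg t -> t = inr b.
Proof.
move E: (inr b) => t0 tw.
elim: tw E => [t1 <- //|t1 t2 sg' t' /= //|t1 l t2 sg' t' tr _ IH E].
by move: tr; rewrite -E /=; case: ifP => // _ /eqP [E2]; rewrite (IH E2) E2.
Qed.

Lemma chain_is_tp : is_tp chain_tp.
Proof. by move=> sg; split=> /chain_verdict_absorbing. Qed.

Lemma chain_output_det : tp_output_deterministic chain_tp.
Proof.
case=> [j|b]; [exists (designated j)|exists i0]; split=> /=.
- by case: ifP => _; [exists (advance j)|exists cpass; rewrite (eqxx (designated j))].
- move=> k [t'] /=; case: ifP => [/eqP exp_k _|_]; first by rewrite /designated -exp_k.
  by case: ifP => // /eqP.
- by exists (inr b); rewrite (eqxx i0).
- by move=> k [t'] /=; case: ifP => // /eqP.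
Qed.

(* Every label other than an input of the implementation is offered
   everywhere, hence the test purpose is input-enabled. *)
Lemma chain_input_enabled : tp_input_enabled chain_tp.
Proof.
have step_def (l : lab LI LU) (t : cstate) : ~~ (if l is LIn _ then true else false) ->
    exists t', ttrans (t := chain_tp) t (Some l) t'.
  case: l => // [o|] _; case: t => [j|b] /=;
    by [case: ifP => _; [exists (advance j)|exists cpass] | exists (inr b)].
by move=> t; split=> [o|]; apply: step_def.
Qed.

(* Every move between distinct states increases the position, counting
   the verdict states as position [size w + 1]. *)
Definition position (t : cstate) : nat := if t is inl j then j else (size w).+1.

Lemma advance_position (j : 'I_(size w).+1) : j < position (advance j).
Proof. by rewrite /advance; case: ifP => [jw|_] /=; rewrite ?inordK. Qed.

Lemma chain_edge_position (t t' : cstate) :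
  tp_edge (T := chain_tp) t t' -> position t < position t'.
Proof.
case=> ne [[l|//]] /=; case: t ne => [j|b] ne /=.
- case: ifP => _; first by move=> /eqP [<-]; apply: advance_position.
  by case: ifP => // _ /eqP [<-].
- by case: ifP => // _ /eqP [E]; rewrite E in ne.
Qed.

Lemma chain_acyclic : tp_acyclic_but_pass_fail chain_tp.
Proof.
split.
- have path_position t t' : tp_path (T := chain_tp) t t' -> position t < position t'.
    elim=> [a b /chain_edge_position //|a b c /chain_edge_position ab _ bc].
    exact: ltn_trans bc.
  by move=> t /path_position; rewrite ltnn.
- case=> [j|[]] [l|] //=; try by [left|right].
  case: ifP => _; last by case: ifP => // _ /eqP.
  by move=> /eqP [E]; have := advance_position j; rewrite E ltnn.
Qed.

Lemma chain_product_fail I (p p' : cstate * st I) sg :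
  pwstep (T := chain_tp) p sg p' -> p'.1 = cfail ->
  if p.1 is inl j then exists r, wstep p.2 (drop j w ++ [:: x]) r else p.1 = cfail.
Proof.
elim=> [[t q] -> //|t t1 q sg' p1 //|t q q1 sg' p1 tau _ IH|
        t t1 q q1 l sg' p1 tr stepI _ IH] fail1.
- case: t IH => [j|b] /= IH; last exact: IH.
  by have [r qr] := IH fail1; exists r; exact: wstep_tau tau qr.
- move: (IH fail1) tr => {IH}; case: t => [j|b] /= IH1; last first.
    by case: ifP => // _ /eqP [E]; rewrite -E in IH1.
  case: ifP => [/eqP exp_l|_]; last by case: ifP => // _ /eqP [E]; rewrite -E in IH1.
  move=> /eqP [E]; rewrite -E /advance in IH1; case: ifP IH1 => [jw|jw] /=.
  + rewrite inordK // => -[r qr]; exists r.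
    rewrite (drop_nth x jw) -[nth x w j]/(expected j) -exp_l.
    exact: wstep_obs stepI qr.
  + have wj : size w <= j by rewrite leqNgt jw.
    move=> _; exists q1; rewrite drop_oversize //=.
    have -> : x = l by rewrite exp_l /expected nth_default.
    exact: wstep_obs stepI (wstep_nil _).
Qed.

Lemma tau_product I (t : cstate) (q r : st I) :
  wstep q [::] r -> pwstep (T := chain_tp) (t, q) [::] (t, r).
Proof.
move E: [::] => e qr; elim: qr E => [s|s s1 sg s' tau _ IH|//] E; first exact: pw_nil.
exact: pw_tauI tau (IH E).
Qed.

Lemma chain_product_reach_fail I (q r : st I) s : wstep q s r ->
  forall j : 'I_(size w).+1, s = drop j w ++ [:: x] ->
  pwstep (T := chain_tp) (inl j, q) s (cfail, r).
Proof.
elim=> [s0|s0 s1 sg s' tau _ IH|s0 l s1 sg s' stepI rest IH] j E.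
- by case: (drop j w) E.
- exact: pw_tauI tau (IH j E).
- case: (ltnP j (size w)) => [jw|wj].
  + move: E; rewrite (drop_nth x jw) => -[exp_l E].
    apply: (@pw_sync _ _ I chain_tp _ (inl (inord j.+1))) stepI _.
      by rewrite /= exp_l /expected eqxx /advance jw.
    by apply: IH; rewrite inordK.
  + move: E; rewrite drop_oversize //= => -[exp_l sg0]; subst sg.
    apply: (@pw_sync _ _ I chain_tp _ cfail) stepI (tau_product _ rest).
    by rewrite /= exp_l /expected nth_default // eqxx /advance ltnNge wj.
Qed.

Lemma chain_fails I : ~ passes I chain_tp <-> exists r, wstep (init I) (w ++ [:: x]) r.
Proof.
split=> [failI|[r wxr] passI]; last first.
  apply: passI; exists (w ++ [:: x]), r.
  by apply: (chain_product_reach_fail (j := ord0) wxr); rewrite drop0.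
apply: NNPP => notrace; apply: failI => -[sg [q pw]]; apply: notrace.
by have := chain_product_fail pw erefl; rewrite /= drop0.
Qed.

Lemma chain_passes I : is_output_lab x -> (passes I chain_tp <-> ~ out_after I w x).
Proof.
move=> outx; split=> [passI [_ [q [wq [r xr]]]]|noutI].
  by apply/chain_fails: passI; exists r; exact: wstep_cat wq xr.
apply: NNPP => /chain_fails [r /wstep_split [q wq xr]].
by apply: noutI; split=> //; exists q; split=> //; exists r.
Qed.

End ChainTestPurpose.

Definition words (A : finType) (n : nat) : seq (seq A) :=
  flatten [seq [seq val t | t : k.-tuple A] | k <- iota 0 n.+1].

Lemma mem_words (A : finType) (n : nat) (u : seq A) :
  (u \in words A n) = (size u <= n).
Proof.
apply/flattenP/idP => [[us /mapP [k]] | un].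
  by rewrite mem_iota ltnS => /andP[_ kn] -> /codomP [t ->]; rewrite size_tuple.
exists [seq val t | t : (size u).-tuple A].
  by apply/mapP; exists (size u); rewrite // mem_iota leq0n add0n ltnS.
by apply/codomP; exists (in_tuple u).
Qed.

Section FaultModel.
Variables (LI LU : finType) (i0 : LI) (S : iolts LI LU) (n : nat).

Definition chain_fault_model : fault_model LI LU :=
  [seq chain_tp i0 c.1 c.2 |
     c <- [seq (u, x) | u <- words (lab LI LU) n, x <- enum {: lab LI LU}]
     & classicb (forbidden S c.1 c.2)].

Lemma in_chain_fault_model (T : tp LI LU) :
  List.In T chain_fault_model <->
  exists u x, [/\ forbidden S u x, size u <= n & T = chain_tp i0 u x].
Proof.
split=> [/In_map [[u x]] | [u [x [forb un ->]]]]; last apply/In_map.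
  rewrite mem_filter => /andP[/classicbP forb /allpairsP [[u' x'] [uw _ /= [eu _]]]] ->.
  by exists u, x; split; rewrite // -mem_words eu.
exists (u, x) => //; rewrite mem_filter; apply/andP; split; first exact/classicbP.
by apply: allpairs_f; rewrite ?mem_words ?mem_enum.
Qed.

End FaultModel.

Lemma card_state_sets (LI LU : finType) (I S : iolts LI LU) (m : nat) :
  at_most_states m I -> #|{set st I}| * #|{set st S}| <= 2 ^ m * 2 ^ #|st S|.
Proof. by move=> sizeI; rewrite !card_sets leq_mul2r leq_pexp2l // orbT. Qed.

Theorem mainTheorem1 (LI LU : finType) (neI : 0 < #|LI|) (neU : 0 < #|LU|)
    (S : iolts LI LU) (m : nat) :
  deterministic S -> 1 <= m ->
  exists M : fault_model LI LU,
    (forall T, List.In T M -> is_tp T) /\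
    m_ioco_complete m S M /\
    (forall T, List.In T M ->
       [/\ tp_deterministic T, tp_output_deterministic T,
           tp_input_enabled T & tp_acyclic_but_pass_fail T]).
Proof.
move=> _ _; have /card_gt0P [i0 _] := neI.
pose n := 2 ^ m * 2 ^ #|st S|.
exists (chain_fault_model i0 S n); split; [|split].
- by move=> T /in_chain_fault_model [u [x [_ _ ->]]]; apply: chain_is_tp.
- move=> I sizeI; rewrite ioco_violation; split.
  + move=> noviol T /in_chain_fault_model [u [x [forb _ ->]]].
    by apply/chain_passes; [case: forb|move=> outI; apply: (noviol u x)].
  + move=> passM u x viol.
    have [u' [forb outI] short] := short_violation viol.
    have [_ outx _] := forb.
    apply: (proj1 (chain_passes i0 u' I outx) _ outI); apply: passM.
    apply/in_chain_fault_model; exists u', x; split=> //.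
    exact: leq_trans (ltnW short) (card_state_sets S sizeI).
- move=> T /in_chain_fault_model [u [x [_ _ ->]]]; split.
  + exact: step_tp_det.
  + exact: chain_output_det.
  + exact: chain_input_enabled.
  + exact: chain_acyclic.
Qed.
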